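(* Let $Q$ be a connected quandle, $S$ a set, $\theta:Q\times Q\to\mathrm{Sym}_S$ a quandle cocycle, $E=Q\times_\theta S$ and $p:E\to Q$, $(x,a)\mapsto x$. The following are equivalent: (i) $\theta$ is cohomologous to the trivial cocycle; (ii) whenever $(x,a),(x,b)\in E$ lie in the same orbit of $\mathrm{LMlt}(E)$, then $a=b$ (i.e. $\ker p\wedge\mathcal{O}_{\mathrm{LMlt}(E)}=0_E$); (iii) for every $u\in E$, the restriction of $p$ to the orbit $u^{\mathrm{LMlt}(E)}$ is a quandle isomorphism $u^{\mathrm{LMlt}(E)}\to Q$.
   Context: A quandle is a set $Q$ with a binary operation $*$ such that every left translation $L_x:y\mapsto x*y$ is bijective, $x*(y*z)=(x*y)*(x*z)$ and $x*x=x$. $\mathrm{LMlt}(Q)=\langle L_x:x\in Q\rangle$; $Q$ is connected if $\mathrm{LMlt}(Q)$ is transitive. A quandle cocycle with values in $\mathrm{Sym}_S$ is $\theta:Q\times Q\to\mathrm{Sym}_S$ with $\theta_{x*y,x*z}\theta_{x,z}=\theta_{x,y*z}\theta_{y,z}$ and $\theta_{x,x}=1$; $\theta$ is cohomologous to the trivial cocycle $\mathbf{1}$ (constantly the identity) if there is $\gamma:Q\to\mathrm{Sym}_S$ with $\theta_{x,y}=\gamma_{x*y}\gamma_y^{-1}$ for all $x,y$. $Q\times_\theta S$ is the quandle on $Q\times S$ with $(x,a)*(y,b)=(x*y,\theta_{x,y}(b))$. Orbits of $\mathrm{LMlt}(E)$ are subquandles of $E$. *)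

From mathcomp Require Import all_boot.
Set Implicit Arguments. Unset Strict Implicit. Unset Printing Implicit Defensive.

Record is_quandle (T : Type) (op : T -> T -> T) : Prop := {
  quandle_lbij : forall x, bijective (op x);
  quandle_ldist : forall x y z, op x (op y z) = op (op x y) (op x z);
  quandle_idem : forall x, op x x = x }.

(* Orbit relation of LMlt = <L_x : x in T>: v is reachable from u by
   applying left translations L_x and their inverses L_x^{-1}. *)
Inductive lorbit (T : Type) (op : T -> T -> T) (u : T) : T -> Prop :=
  | lorbit_refl : lorbit op u u
  | lorbit_L : forall x v, lorbit op u v -> lorbit op u (op x v)
  | lorbit_Linv : forall x v w, lorbit op u v -> op x w = v -> lorbit op u w.

Definition connected (T : Type) (op : T -> T -> T) : Prop :=
  forall x y, lorbit op x y.

(* theta : Q x Q -> Sym_S; composition is functional composition. *)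
Definition quandle_cocycle (Q S : Type) (op : Q -> Q -> Q)
  (theta : Q -> Q -> S -> S) : Prop :=
  (forall x y, bijective (theta x y)) /\
  (forall x y z c, theta (op x y) (op x z) (theta x z c)
                   = theta x (op y z) (theta y z c)) /\
  (forall x c, theta x x c = c).

Definition cohomologous_trivial (Q S : Type) (op : Q -> Q -> Q)
  (theta : Q -> Q -> S -> S) : Prop :=
  exists (gamma gammainv : Q -> S -> S),
    (forall x, cancel (gamma x) (gammainv x) /\ cancel (gammainv x) (gamma x)) /\
    (forall x y b, theta x y b = gamma (op x y) (gammainv y b)).

Definition ext_op (Q S : Type) (op : Q -> Q -> Q) (theta : Q -> Q -> S -> S)
  (u v : Q * S) : Q * S := (op u.1 v.1, theta u.1 v.1 v.2).

Definition orbit_sub (T : Type) (op : T -> T -> T) (u : T) :=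
  {v : T | lorbit op u v}.

Definition orbit_op (T : Type) (op : T -> T -> T) (u : T)
  (v w : orbit_sub op u) : orbit_sub op u :=
  exist _ (op (proj1_sig v) (proj1_sig w)) (lorbit_L (proj1_sig v) (proj2_sig w)).

Definition quandle_iso (A B : Type) (opA : A -> A -> A) (opB : B -> B -> B)
  (f : A -> B) : Prop :=
  bijective f /\ forall a b, f (opA a b) = opB (f a) (f b).

(* If theta_{x,y} = gamma_{x*y} gamma_y^{-1}, then (x, a) |-> gamma_x^{-1}(a)
   is constant on LMlt(E)-orbits, so no orbit meets a fibre of p twice.
   Conversely, since Q is connected and every theta_{x,y} is bijective, every
   orbit meets every fibre.  When it meets each fibre exactly once, moving
   a point of the fibre over a base point q0 along its orbit to the fibre
   over x defines gamma_x, and p restricted to an orbit is a bijection. *)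
From Stdlib Require Import Classical ClassicalEpsilon ProofIrrelevance.
From mathcomp Require Import all_boot.
Set Implicit Arguments. Unset Strict Implicit. Unset Printing Implicit Defensive.

Section LeftOrbits.
Variables (T : Type) (op : T -> T -> T).

Lemma lorbit_trans u v w : lorbit op u v -> lorbit op v w -> lorbit op u w.
Proof.
move=> uv; elim=> [|x v' _ IH|x v' w' _ IH eq_v'] //; first exact: lorbit_L.
exact: lorbit_Linv IH eq_v'.
Qed.

Lemma lorbit_sym u v : lorbit op u v -> lorbit op v u.
Proof.
elim=> [|x v' _ IH|x v' w _ IH eq_v']; first exact: lorbit_refl.
  exact: lorbit_trans (lorbit_Linv (lorbit_refl _ _) (erefl _)) IH.
by apply: lorbit_trans IH; rewrite -eq_v'; apply: lorbit_L; apply: lorbit_refl.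
Qed.

Lemma lorbit_invariant (R : Type) (f : T -> R) :
  (forall x v, f (op x v) = f v) -> forall u v, lorbit op u v -> f u = f v.
Proof.
move=> fL u v; elim=> [|x w _ IH|x w w' _ IH eq_w] //; first by rewrite fL.
by rewrite IH -eq_w fL.
Qed.

End LeftOrbits.

Section Extension.
Variables (Q S : Type) (op : Q -> Q -> Q) (theta : Q -> Q -> S -> S).
Local Notation E_op := (ext_op op theta).

Definition fibres_separated : Prop :=
  forall x a b, lorbit E_op (x, a) (x, b) -> a = b.

Lemma cohomologous_trivial_fibres_separated :
  cohomologous_trivial op theta -> fibres_separated.
Proof.
case=> gamma [gammainv [gammaK eq_theta]] x a b.
have gammainv_invariant x' v : gammainv (E_op x' v).1 (E_op x' v).2 = gammainv v.1 v.2.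
  by rewrite /= eq_theta (proj1 (gammaK _)).
move/(lorbit_invariant gammainv_invariant) => /=.
exact: (can_inj (proj2 (gammaK x))).
Qed.

Lemma injective_orbit_proj_fibres_separated :
  (forall u, injective (fun v : orbit_sub E_op u => (proj1_sig v).1)) ->
  fibres_separated.
Proof.
move=> inj x a b ab.
by have [] := inj (x, a) (exist _ _ (lorbit_refl _ _)) (exist _ _ ab) erefl.
Qed.

Hypothesis theta_bij : forall x y, bijective (theta x y).

Lemma lorbit_lift y z a : lorbit op y z -> exists b, lorbit E_op (y, a) (z, b).
Proof.
elim=> [|x v _ [b yv]|x v w _ [b yv] eq_v]; first by exists a; apply: lorbit_refl.
  by exists (theta x v b); apply: (lorbit_L (x, b) yv).
have [g _ gK] := theta_bij x w.
by exists (g b); apply: (lorbit_Linv (x := (x, b)) yv); rewrite /ext_op /= gK eq_v.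
Qed.

Hypothesis Q_connected : connected op.

Lemma lorbit_meets_fibre (u : Q * S) x : exists b, lorbit E_op u (x, b).
Proof. by case: u => y a; apply/lorbit_lift/Q_connected. Qed.

Definition transport (u : Q * S) (x : Q) : S :=
  proj1_sig (constructive_indefinite_description _ (lorbit_meets_fibre u x)).

Lemma lorbit_transport u x : lorbit E_op u (x, transport u x).
Proof. exact: proj2_sig (constructive_indefinite_description _ (lorbit_meets_fibre u x)). Qed.

Lemma fibres_separated_cohomologous_trivial :
  fibres_separated -> cohomologous_trivial op theta.
Proof.
move=> sep; have [[q0]|noQ] := classic (inhabited Q); last first.
  by exists (fun _ => id), (fun _ => id); split=> x; case: noQ.
exists (fun x a => transport (q0, a) x), (fun x b => transport (x, b) q0).
split=> [x|x y b]; first split=> c; apply/esym/sep.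
- exact: lorbit_trans (lorbit_transport _ _) (lorbit_transport _ _).
- exact: lorbit_trans (lorbit_transport _ _) (lorbit_transport _ _).
- apply: lorbit_trans (lorbit_sym (lorbit_transport _ _)) _.
  apply: lorbit_trans (lorbit_sym (lorbit_transport (y, b) q0)) _.
  exact: (lorbit_L (x, b) (lorbit_refl E_op (y, b))).
Qed.

Lemma fibres_separated_orbit_proj_iso u : fibres_separated ->
  quandle_iso (@orbit_op _ E_op u) op (fun v => (proj1_sig v).1).
Proof.
move=> sep; split=> //.
exists (fun x => exist _ (x, transport u x) (lorbit_transport u x)) => // -[[x b] uv].
apply: subset_eq_compat; congr pair; apply: sep.
exact: lorbit_trans (lorbit_sym (lorbit_transport u x)) uv.
Qed.

End Extension.

Theorem proposition2p3 (Q S : Type) (op : Q -> Q -> Q)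
  (theta : Q -> Q -> S -> S) :
  is_quandle op -> connected op -> quandle_cocycle op theta ->
  let E_op := ext_op op theta in
  let p := fun u : Q * S => u.1 in
  (cohomologous_trivial op theta <->
   (forall (x : Q) (a b : S), lorbit E_op (x, a) (x, b) -> a = b)) /\
  ((forall (x : Q) (a b : S), lorbit E_op (x, a) (x, b) -> a = b) <->
   (forall u : Q * S,
      quandle_iso (@orbit_op _ E_op u) op (fun v => p (proj1_sig v)))).
Proof.
move=> _ Q_connected [theta_bij _] /=; split; split.
- exact: cohomologous_trivial_fibres_separated.
- exact: fibres_separated_cohomologous_trivial.
- by move=> sep u; apply: fibres_separated_orbit_proj_iso.
- move=> iso; apply: injective_orbit_proj_fibres_separated => u.
  exact: bij_inj (proj1 (iso u)).
Qed.
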